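(* Let $(\omega,\gamma)$ be a left-invariant half-flat $\mathrm{SU}(3)$-structure on $M=S^3\times S^3$, written as $\omega\in A\otimes B$, $\gamma=a\,e^{135}+b\,e^{246}+d\beta$ with $\beta\in A\otimes B$, and let $P=\Phi(K_\omega)$, $Q=\Phi(K_\beta)$. Suppose the structure is coupled, i.e. $d\omega=\mu\gamma$ for some constant $\mu\in\mathbb R$. Then $\mu\neq0$, $a=b=0$ (so $[\gamma]=0$ in $H^3(M)$), and $P=\mu Q$.
   Context: $M=S^3\times S^3$ as a Lie group; left-invariant 1-forms $e^1,\dots,e^6$ with $de^1=e^{35},\ de^3=e^{51},\ de^5=e^{13},\ de^2=e^{46},\ de^4=e^{62},\ de^6=e^{24}$; $A=\mathrm{span}(e^1,e^3,e^5)$, $B=\mathrm{span}(e^2,e^4,e^6)$. For $\eta=\sum k_{ij}e^{2i-1}\wedge e^{2j}\in A\otimes B$, $K_\eta=(k_{ij})$. An $\mathrm{SU}(3)$-structure is a pair $(\omega,\gamma)$, $\omega$ a nondegenerate 2-form, $\gamma$ a stable 3-form with stabiliser (up to $\mathbb Z/2$) $\mathrm{SL}(3,\mathbb C)$, with $\omega\wedge\gamma=0$, $3\gamma\wedge\hat\gamma=2\omega^3$, $\omega(\cdot,J\cdot)>0$; half-flat means $d\gamma=0=d(\omega^2)$. For such structures one always has $\omega\in A\otimes B$ and $\gamma=ae^{135}+be^{246}+d\beta$ with $\beta\in A\otimes B$. $\Phi\colon\mathbb R^{3\times3}\to S^2_0(\mathbb R^4)$ is the linear map with diagonal $(-k_{11}-k_{22}-k_{33},\,-k_{11}+k_{22}+k_{33},\,k_{11}-k_{22}+k_{33},\,k_{11}+k_{22}-k_{33})$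 and off-diagonal entries $S_{12}=k_{23}-k_{32}$, $S_{13}=-k_{13}+k_{31}$, $S_{14}=k_{12}-k_{21}$, $S_{23}=-k_{12}-k_{21}$, $S_{24}=-k_{13}-k_{31}$, $S_{34}=-k_{23}-k_{32}$. *)

(* Left-invariant forms on S^3 x S^3, i.e. on the Lie algebra
   su(2)+su(2) with basis e_1..e_6 (0-based indices 0..5 below). *)
From HB Require Import structures.
From mathcomp Require Import all_boot all_order all_fingroup all_algebra.
Set Implicit Arguments. Unset Strict Implicit. Unset Printing Implicit Defensive.
Import Order.TTheory GRing.Theory Num.Theory.
Local Open Scope ring_scope.

(* A k-form on the 6-dimensional Lie algebra, given by its values on k-tuples
   of basis vectors e_(t 0), ..., e_(t (k-1)). *)
Notation form R k := ({ffun {ffun 'I_k%N -> 'I_6} -> R}).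

Section Forms.
Variable R : rcfType.

(* the basis 1-form e^(i+1) (0-based index i) *)
Definition e1f (i : 'I_6) : form R 1 := [ffun t : {ffun 'I_1 -> 'I_6} => ((t ord0 == i) : nat)%:R].

(* wedge product, determinant convention:
   (a /\ b)(v_1..v_{p+q}) = 1/(p!q!) sum_s sgn(s) a(v_s(1),..) b(..) *)
Definition wedge (p q : nat) (a : form R p) (b : form R q) : form R (p + q) :=
  [ffun t : {ffun 'I_(p + q) -> 'I_6} => (p`! * q`!)%:R^-1 *
     \sum_(s : 'S_(p + q))
        (-1) ^+ odd_perm s *
        a [ffun i => t (s (lshift q i))] *
        b [ffun j => t (s (rshift p j))]].

Definition fscale (k : nat) (c : R) (a : form R k) : form R k :=
  [ffun t => c * a t].

Definition w3 (a b c : form R 1) : form R 3 := wedge (wedge a b) c.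

Definition iota (k : nat) (c : 'I_6) (a : form R k.+1) : form R k :=
  [ffun t : {ffun 'I_k -> 'I_6} => a [ffun i => if unlift ord0 i is Some j then t j else c]].

Definition ix (n : nat) : 'I_6 := inord n.

(* structure equations: de^1=e^35, de^3=e^51, de^5=e^13,
   de^2=e^46, de^4=e^62, de^6=e^24 (1-based) *)
Definition dE (c : 'I_6) : form R 2 :=
  match val c with
  | 0 => wedge (e1f (ix 2)) (e1f (ix 4))
  | 2 => wedge (e1f (ix 4)) (e1f (ix 0))
  | 4 => wedge (e1f (ix 0)) (e1f (ix 2))
  | 1 => wedge (e1f (ix 3)) (e1f (ix 5))
  | 3 => wedge (e1f (ix 5)) (e1f (ix 1))
  | _ => wedge (e1f (ix 1)) (e1f (ix 3))
  end.

(* exterior derivative on left-invariant (k+1)-forms: the unique degree +1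
   antiderivation extending e^c |-> de^c, namely  d = sum_c de^c /\ iota_(e_c) *)
Definition dform (k : nat) (a : form R k.+1) : form R k.+2 :=
  \sum_(c < 6) wedge (dE c) (iota c a).

Definition tup2 (i j : 'I_6) : {ffun 'I_2 -> 'I_6} :=
  [ffun k : 'I_2 => if k == ord0 then i else j].

(* the bilinear form associated to a 2-form, on column vectors (coordinates
   w.r.t. e_1..e_6) *)
Definition bil (w : form R 2) (X Y : 'cV[R]_6) : R :=
  \sum_(i < 6) \sum_(j < 6) X i 0 * Y j 0 * w (tup2 i j).

Definition nondegenerate (w : form R 2) : Prop :=
  \det (\matrix_(i < 6, j < 6) w (tup2 i j)) != 0.

Definition cof (F : 'M[R]_6) (i : nat) : form R 1 :=
  \sum_(j < 6) fscale (F (ix i) j) (e1f j).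

(* Re and Im of (f^1 + i f^2)(f^3 + i f^4)(f^5 + i f^6) *)
Definition psip (F : 'M[R]_6) : form R 3 :=
  w3 (cof F 0) (cof F 2) (cof F 4) - w3 (cof F 0) (cof F 3) (cof F 5)
  - w3 (cof F 1) (cof F 2) (cof F 5) - w3 (cof F 1) (cof F 3) (cof F 4).
Definition psim (F : 'M[R]_6) : form R 3 :=
  w3 (cof F 0) (cof F 2) (cof F 5) + w3 (cof F 0) (cof F 3) (cof F 4)
  + w3 (cof F 1) (cof F 2) (cof F 4) - w3 (cof F 1) (cof F 3) (cof F 5).

(* standard complex structure in the dual frame: J e'_1 = e'_2, J e'_2 = -e'_1,... *)
Definition J0 : 'M[R]_6 :=
  \matrix_(i < 6, j < 6)
    (if odd i && (j == i.-1 :> nat) then 1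
     else if ~~ odd i && (j == i.+1 :> nat) then -1 else 0).

(* the almost complex structure induced by the coframe F, acting on
   coordinate column vectors *)
Definition JF (F : 'M[R]_6) : 'M[R]_6 := invmx F *m J0 *m F.

(* gamma is a stable 3-form with stabiliser SL(3,C) (up to Z/2): it lies in the
   GL(6,R)-orbit of Re(dz1 dz2 dz3) *)
Definition stable_SL3C (g : form R 3) : Prop :=
  exists F : 'M[R]_6, F \in unitmx /\ g = psip F.

(* SU(3)-structure (omega, gamma): omega nondegenerate, gamma stable with
   stabiliser SL(3,C), and with hat-gamma = psim F and J = JF F induced by an
   adapted coframe F: omega /\ gamma = 0, 3 gamma /\ hat-gamma = 2 omega^3,
   omega(., J .) > 0. *)
Definition SU3_structure (w : form R 2) (g : form R 3) : Prop :=
  nondegenerate w /\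
  exists F : 'M[R]_6, [/\ F \in unitmx, g = psip F,
    (wedge w g : form R 5) = 0,
    fscale 3 (wedge g (psim F) : form R 6) = fscale 2 (wedge (wedge w w) w : form R 6)
    & forall X : 'cV[R]_6, X != 0 -> 0 < bil w X (JF F *m X)].

Definition half_flat (w : form R 2) (g : form R 3) : Prop :=
  dform g = 0 /\ dform (wedge w w : form R 4) = 0.

(* element of A (x) B with coefficient matrix K:  sum k_ij e^(2i-1) /\ e^(2j) *)
Definition AB_form (K : 'M[R]_3) : form R 2 :=
  \sum_(i < 3) \sum_(j < 3)
     fscale (K i j) (wedge (e1f (ix (2 * i))) (e1f (ix (2 * j + 1)))).

Definition e135 : form R 3 := w3 (e1f (ix 0)) (e1f (ix 2)) (e1f (ix 4)).
Definition e246 : form R 3 := w3 (e1f (ix 1)) (e1f (ix 3)) (e1f (ix 5)).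

Definition gamma_of (a b : R) (Kb : 'M[R]_3) : form R 3 :=
  fscale a e135 + fscale b e246 + dform (AB_form Kb).

(* the map Phi : R^{3x3} -> S^2_0(R^4), entries 1-based *)
Definition kk (K : 'M[R]_3) (i j : nat) : R := K (inord i.-1) (inord j.-1).
Definition phi_entry (K : 'M[R]_3) (i j : nat) : R :=
  match i, j with
  | 1, 1 => - kk K 1 1 - kk K 2 2 - kk K 3 3
  | 2, 2 => - kk K 1 1 + kk K 2 2 + kk K 3 3
  | 3, 3 => kk K 1 1 - kk K 2 2 + kk K 3 3
  | 4, 4 => kk K 1 1 + kk K 2 2 - kk K 3 3
  | 1, 2 | 2, 1 => kk K 2 3 - kk K 3 2
  | 1, 3 | 3, 1 => - kk K 1 3 + kk K 3 1
  | 1, 4 | 4, 1 => kk K 1 2 - kk K 2 1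
  | 2, 3 | 3, 2 => - kk K 1 2 - kk K 2 1
  | 2, 4 | 4, 2 => - kk K 1 3 - kk K 3 1
  | 3, 4 | 4, 3 => - kk K 2 3 - kk K 3 2
  | _, _ => 0
  end.
Definition Phi (K : 'M[R]_3) : 'M[R]_4 :=
  \matrix_(i < 4, j < 4) phi_entry K i.+1 j.+1.

End Forms.

(* The
   proof evaluates the coupling equation d omega = mu gamma on well-chosen
   triples of basis vectors:
   - on a triple (e_a, e_a', e_b) with a, a' the two A-indices cyclically
     following the A-index i and b the j-th B-index (the "slot" (i,j)), the
     3-form d(AB_form K) takes the value K i j, while e^135 and e^246 vanish;
     hence Kw = mu Kb entrywise;
   - d(A (x) B) has no component along e^135 or e^246, so evaluating on
     (e_1,e_3,e_5) and (e_2,e_4,e_6) gives mu a = 0 and mu b = 0.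
   If mu were 0 then omega = AB_form 0 = 0 would be degenerate, so mu != 0,
   whence a = b = 0, and Phi Kw = mu Phi Kb by linearity of Phi. *)
From Pilot Require Import Defs.
From HB Require Import structures.
From mathcomp Require Import all_boot all_order all_fingroup all_algebra.
From mathcomp Require Import ring.
Import Order.TTheory GRing.Theory Num.Theory.
Local Open Scope ring_scope.
Set Implicit Arguments.
Unset Strict Implicit.
Unset Printing Implicit Defensive.

(* Splitting a sum over 'S_(n+1) according to the image of 0; this is what
   turns the permutation sums in the definition of wedge into finite
   expansions.  The bijection is the one of matrix.v's cofactor expansion. *)
Lemma sum_perm_lift (V : nmodType) n (F : 'S_n.+1 -> V) :
  \sum_s F s = \sum_j \sum_(s : 'S_n) F (lift_perm ord0 j s).
Proof.
rewrite (partition_big (fun s : 'S_n.+1 => s ord0) predT) //=.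
apply: eq_bigr => j0 _.
rewrite (reindex (lift_perm ord0 j0)); last first.
  pose ulsf i (s : 'S_n.+1) k := odflt k (unlift (s i) (s (lift i k))).
  have ulsfK i (s : 'S_n.+1) k : lift (s i) (ulsf i s k) = s (lift i k).
    rewrite /ulsf; have := neq_lift i k.
    by rewrite -(can_eq (permK s)) => /unlift_some[] ? ? ->.
  have inj_ulsf : injective (ulsf ord0 _).
    move=> s; apply: can_inj (ulsf (s ord0) s^-1%g) _ => k'.
    by rewrite {1}/ulsf ulsfK !permK liftK.
  exists (fun s => perm (inj_ulsf s)) => [s _ | s].
    by apply/permP => k'; rewrite permE /ulsf lift_perm_lift lift_perm_id liftK.
  move/(s _ =P _) => si0; apply/permP => k.
  case: (unliftP ord0 k) => [k'|] ->; rewrite ?lift_perm_id //.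
  by rewrite lift_perm_lift -si0 permE ulsfK.
by apply: eq_bigl => s; rewrite lift_perm_id eqxx.
Qed.

Lemma sum_perm1 (V : nmodType) (F : 'S_1 -> V) : \sum_s F s = F 1%g.
Proof.
by rewrite (big_pred1 1%g) // => s /=; apply/esym/eqP/permP => i; rewrite !ord1.
Qed.

Notation O6 n := (@Ordinal 6 n isT).
Notation O3 n := (@Ordinal 3 n isT).

Lemma sum6 (V : nmodType) (F : 'I_6 -> V) :
  \sum_c F c = F (O6 0) + F (O6 1) + F (O6 2) + F (O6 3) + F (O6 4) + F (O6 5).
Proof.
rewrite !big_ord_recr big_ord0 /= add0r.
by repeat congr (_ + _); congr F; apply: val_inj.
Qed.

Lemma sum3 (V : nmodType) (F : 'I_3 -> V) :
  \sum_c F c = F (O3 0) + F (O3 1) + F (O3 2).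
Proof.
rewrite !big_ord_recr big_ord0 /= add0r.
by repeat congr (_ + _); congr F; apply: val_inj.
Qed.

Lemma ord3P (P : 'I_3 -> Prop) : P (O3 0) -> P (O3 1) -> P (O3 2) -> forall i, P i.
Proof. by move=> P0 P1 P2 [[|[|[|//]]] Hi]; rewrite (bool_irrelevance Hi isT). Qed.

Ltac concrete_ix :=
  repeat match goal with |- context [ix ?n] =>
    let k := eval vm_compute in n in
    rewrite (_ : ix n = @Ordinal 6 k isT); last by apply: val_inj; rewrite /= inordK
  end.

Section BasisValues.
Variable R : rcfType.

Definition t1 (x : 'I_6) : {ffun 'I_1 -> 'I_6} := [ffun _ => x].
Definition tup3 (x y z : 'I_6) : {ffun 'I_3 -> 'I_6} :=
  [ffun k : 'I_3 => if val k == 0%N then x else if val k == 1%N then y else z].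

Lemma ffun1E (G : 'I_1 -> 'I_6) : [ffun i => G i] = t1 (G ord0).
Proof. by apply/ffunP => i; rewrite !ffunE (ord1 i). Qed.

Lemma ffun2E (G : 'I_2 -> 'I_6) :
  [ffun i => G i] = tup2 (G ord0) (G (lift ord0 ord0)).
Proof.
by apply/ffunP => -[[|[|//]] Hi]; rewrite !ffunE /=; congr G; apply: val_inj.
Qed.

Lemma e1fE i x : e1f R i (t1 x) = (x == i)%:R.
Proof. by rewrite !ffunE. Qed.

Lemma wedge11 (a b : Defs.form R 1) u v :
  wedge a b (tup2 u v) = a (t1 u) * b (t1 v) - a (t1 v) * b (t1 u).
Proof.
rewrite ffunE sum_perm_lift !big_ord_recl big_ord0 !sum_perm1.
rewrite !odd_lift_perm !odd_perm1 /= !ffun1E.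
have -> : lshift 1 (ord0 : 'I_1) = ord0 :> 'I_2 by apply: val_inj.
have -> : rshift 1 (ord0 : 'I_1) = lift ord0 ord0 :> 'I_2 by apply: val_inj.
rewrite !(@lift_perm_id 1) !(@lift_perm_lift 1) !perm1 !ffunE /= invr1; ring.
Qed.

Definition alternating (w : Defs.form R 2) : Prop :=
  forall x y, w (tup2 y x) = - w (tup2 x y).

Lemma wedge21 (w : Defs.form R 2) (c : Defs.form R 1) x y z : alternating w ->
  wedge w c (tup3 x y z) =
  w (tup2 x y) * c (t1 z) + w (tup2 y z) * c (t1 x) + w (tup2 z x) * c (t1 y).
Proof.
move=> w_alt.
rewrite ffunE sum_perm_lift !big_ord_recl big_ord0.
rewrite !sum_perm_lift !big_ord_recl !big_ord0 !sum_perm1.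
rewrite !odd_lift_perm !odd_perm1 /= !ffun1E !ffun2E.
have -> : lshift 1 (ord0 : 'I_2) = ord0 :> 'I_3 by apply: val_inj.
have -> : lshift 1 (lift ord0 ord0 : 'I_2) = lift ord0 ord0 :> 'I_3 by apply: val_inj.
have -> : rshift 2 (ord0 : 'I_1) = lift ord0 (lift ord0 ord0) :> 'I_3 by apply: val_inj.
rewrite !(@lift_perm_id 2) !(@lift_perm_lift 2) !(@lift_perm_id 1).
rewrite !(@lift_perm_lift 1) !perm1 !ffunE /= (w_alt x y) (w_alt z x) (w_alt y z).
by rewrite (_ : (2`! * 1`!)%N = 2%N) //; field.
Qed.

Lemma iotaE (c : 'I_6) (w : Defs.form R 2) x : Defs.iota c w (t1 x) = w (tup2 c x).
Proof.
rewrite ffunE; congr (w _); apply/ffunP => i; rewrite !ffunE.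
case: (unliftP ord0 i) => [j|] ->; rewrite ?liftK ?unlift_none ?eqxx //.
by rewrite eq_sym (negbTE (neq_lift _ _)) ffunE.
Qed.

Definition elem2 (p q u v : 'I_6) : R :=
  (u == p)%:R * (v == q)%:R - (v == p)%:R * (u == q)%:R.

Lemma wedge_e1fE p q u v : wedge (e1f R p) (e1f R q) (tup2 u v) = elem2 p q u v.
Proof. by rewrite wedge11 !e1fE. Qed.

Lemma wedge_e1f_alternating p q : alternating (wedge (e1f R p) (e1f R q)).
Proof. by move=> x y; rewrite !wedge_e1fE /elem2 opprB. Qed.

Lemma w3_e1fE p q r x y z : w3 (e1f R p) (e1f R q) (e1f R r) (tup3 x y z) =
  elem2 p q x y * (z == r)%:R + elem2 p q y z * (x == r)%:R
  + elem2 p q z x * (y == r)%:R.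
Proof.
by rewrite /w3 (wedge21 _ _ _ _ (wedge_e1f_alternating _ _)) !wedge_e1fE !e1fE.
Qed.

Lemma dE_cyclic (c : 'I_6) :
  dE R c = wedge (e1f R (ix ((c + 2) %% 6))) (e1f R (ix ((c + 4) %% 6))).
Proof. by case: c => [[|[|[|[|[|[|//]]]]]] ?]; rewrite /dE; concrete_ix. Qed.

Lemma dform_tup3 (w : Defs.form R 2) x y z : dform w (tup3 x y z) =
  \sum_(c < 6) (elem2 (ix ((c + 2) %% 6)) (ix ((c + 4) %% 6)) x y * w (tup2 c z)
              + elem2 (ix ((c + 2) %% 6)) (ix ((c + 4) %% 6)) y z * w (tup2 c x)
              + elem2 (ix ((c + 2) %% 6)) (ix ((c + 4) %% 6)) z x * w (tup2 c y)).
Proof.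
rewrite sum_ffunE; apply: eq_bigr => c _.
by rewrite dE_cyclic (wedge21 _ _ _ _ (wedge_e1f_alternating _ _)) !wedge_e1fE !iotaE.
Qed.

Lemma AB_formE (K : 'M[R]_3) u v : AB_form K (tup2 u v) =
  \sum_i \sum_j K i j * elem2 (ix (2 * i)) (ix (2 * j + 1)) u v.
Proof.
rewrite sum_ffunE; apply: eq_bigr => i _; rewrite sum_ffunE; apply: eq_bigr => j _.
by rewrite ffunE wedge_e1fE.
Qed.

Local Ltac basis_simpl :=
  concrete_ix; rewrite /elem2 /=
    ?(mulr0n, mulr1n, oppr0, mul0r, mulr0, mul1r, mulr1, subr0, sub0r, add0r, addr0).

(* Evaluate d(AB_form K) on a concrete triple: the structure constants are
   simplified first, so only the surviving values of AB_form get expanded. *)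
Local Ltac eval_dAB :=
  rewrite dform_tup3 sum6; basis_simpl; rewrite !AB_formE !sum3; basis_simpl.

(* The triple (e_a, e_a', e_b) dual to the component
   de^(A_i) /\ e^(B_j) = e^(A_(i+1)) /\ e^(A_(i+2)) /\ e^(B_j) of
   d(e^(A_i) /\ e^(B_j)), where A_i = 2i and B_j = 2j+1 (0-based). *)
Definition slot (i j : 'I_3) : {ffun 'I_3 -> 'I_6} :=
  tup3 (ix (2 * ordS i)) (ix (2 * ordS (ordS i))) (ix (2 * j + 1)).

(* d is injective on A (x) B: the slot (i,j) recovers the coefficient K i j. *)
Lemma dAB_slot (K : 'M[R]_3) i j : dform (AB_form K) (slot i j) = K i j.
Proof. by move: i j; apply: ord3P; apply: ord3P; rewrite /slot; eval_dAB. Qed.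

(* The slots see no e^135 or e^246 component (they mix A and B indices). *)
Lemma e135_slot i j : e135 R (slot i j) = 0.
Proof. by move: i j; apply: ord3P; apply: ord3P; rewrite /e135 w3_e1fE; basis_simpl. Qed.

Lemma e246_slot i j : e246 R (slot i j) = 0.
Proof. by move: i j; apply: ord3P; apply: ord3P; rewrite /e246 w3_e1fE; basis_simpl. Qed.

Lemma dAB_135 (K : 'M[R]_3) : dform (AB_form K) (tup3 (ix 0) (ix 2) (ix 4)) = 0.
Proof. by eval_dAB. Qed.

Lemma dAB_246 (K : 'M[R]_3) : dform (AB_form K) (tup3 (ix 1) (ix 3) (ix 5)) = 0.
Proof. by eval_dAB. Qed.

Lemma e135_135 : e135 R (tup3 (ix 0) (ix 2) (ix 4)) = 1.
Proof. by rewrite /e135 w3_e1fE; basis_simpl. Qed.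

Lemma e246_135 : e246 R (tup3 (ix 0) (ix 2) (ix 4)) = 0.
Proof. by rewrite /e246 w3_e1fE; basis_simpl. Qed.

Lemma e135_246 : e135 R (tup3 (ix 1) (ix 3) (ix 5)) = 0.
Proof. by rewrite /e135 w3_e1fE; basis_simpl. Qed.

Lemma e246_246 : e246 R (tup3 (ix 1) (ix 3) (ix 5)) = 1.
Proof. by rewrite /e246 w3_e1fE; basis_simpl. Qed.

Lemma AB_form0_degenerate : ~ Defs.nondegenerate (AB_form (0 : 'M[R]_3)).
Proof.
rewrite /Defs.nondegenerate (_ : \matrix_(i, j) _ = 0) ?det0 ?eqxx //.
apply/matrixP => i j; rewrite !mxE AB_formE big1 // => i' _.
by rewrite big1 // => j' _; rewrite mxE mul0r.
Qed.

Lemma Phi_scale (mu : R) (K : 'M[R]_3) : Phi (mu *: K) = mu *: Phi K.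
Proof.
apply/matrixP => i j; rewrite !mxE.
by case: i => [[|[|[|[|//]]]] ?]; case: j => [[|[|[|[|//]]]] ?];
  rewrite /= /kk !mxE; ring.
Qed.

End BasisValues.

Section Coupled.
Variables (R : rcfType) (Kw Kb : 'M[R]_3) (a b mu : R).
Hypothesis coupled : dform (AB_form Kw) = fscale mu (gamma_of a b Kb).

Lemma coupled_eval t : dform (AB_form Kw) t =
  mu * (a * e135 R t + b * e246 R t + dform (AB_form Kb) t).
Proof. by rewrite coupled !ffunE. Qed.

Lemma coupled_coeffs : Kw = mu *: Kb.
Proof.
apply/matrixP => i j; have := coupled_eval (slot i j).
by rewrite !dAB_slot e135_slot e246_slot !mulr0 !add0r mxE.
Qed.

Lemma coupled_exact : mu * a = 0 /\ mu * b = 0.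
Proof.
have := coupled_eval (tup3 (ix 0) (ix 2) (ix 4)).
rewrite !dAB_135 e135_135 e246_135 mulr1 mulr0 !addr0 => /esym ->.
have := coupled_eval (tup3 (ix 1) (ix 3) (ix 5)).
by rewrite !dAB_246 e135_246 e246_246 mulr0 mulr1 add0r addr0 => /esym ->.
Qed.

End Coupled.

Theorem mainTheorem4 (R : rcfType) (Kw Kb : 'M[R]_3) (a b mu : R) :
  SU3_structure (AB_form Kw) (gamma_of a b Kb) ->
  half_flat (AB_form Kw) (gamma_of a b Kb) ->
  dform (AB_form Kw) = fscale mu (gamma_of a b Kb) ->
  [/\ mu != 0, a = 0, b = 0 & Phi Kw = mu *: Phi Kb].
Proof.
move=> [nondeg _] _ coupled.
have Kw_eq := coupled_coeffs coupled.
have mu_neq0 : mu != 0.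
  apply/eqP => mu0; apply: (@AB_form0_degenerate R).
  by rewrite -(scale0r Kb) -mu0 -Kw_eq.
have [mu_a mu_b] := coupled_exact coupled.
split => //; last by rewrite Kw_eq Phi_scale.
- by apply: (mulfI mu_neq0); rewrite mu_a mulr0.
- by apply: (mulfI mu_neq0); rewrite mu_b mulr0.
Qed.
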